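(* Let $p$ be an odd prime and take $k=1$. For every $s\ge3$ and $0\le t\le p-1$, the $p$-Fibonacci number of the vertex $V_{s,t}=\lambda\big(p(2sp-(2s+1)),\,p(sp-(s+1))+t\big)$ is $$\mathcal M_{V_{s,t}}=\begin{cases}\dfrac{p^{s-3}(p-1)}{2}\Big(2(s-1)p^2+2t-(2s-5)\Big), & 0\le t<\frac{p-1}{2},\\[6pt] \dfrac{p^{s-3}(p-1)}{2}\Big(2(s-1)p^2+2t-2p-(2s-5)\Big), & \frac{p-1}{2}\le t\le p-1.\end{cases}$$
   Context: Fix an odd prime $p$ and an integer $k\ge 0$. For integers $0\le i<n$ write $\lambda(n,i)=(n-i,1^i)$ for the hook partition of $n$ with $n-i$ boxes in its first row and $i$ further boxes in its first column. If $\mu=\lambda(n',i')$ is obtained from $\lambda(n,i)$ by appending $m=(n'-i')-(n-i)\ge 0$ boxes to the first row and $n''=i'-i\ge 0$ boxes to the first column, we say $\mu$ is obtained by adding the block $B_{m,n''}$ ($m$ horizontal nodes, $n''$ vertical nodes). Put $x_s=p^k(sp-(s+1))$. The relevant part (''column $k$'') of the $p$-Bratteli diagram is the graded directed graph with vertices: on floor $2k+1$, $S_i=\lambda(p^k(p-1),i)$ for $0\le i<p^k(p-1)$; on floor $2(k+s)$ ($s\ge1$), $V_{s,l}=\lambda\big(p^k(2sp-(2s+1)),\,x_s+l\big)$ for $0\le l<p^k$; on floor $2(k+s)-1$ ($s\ge2$), $W_{s,l'}=\lambda\big(p^k((2s-1)p-2s),\,x_{s-1}+l'\big)$ for $0\le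 l'<p^{k+1}$; and edges, each labelled by the block added: (E1) $S_i\to V_{1,l}$ exactly when $i=p^kt+l$ with $0\le t\le p-2$, block $B_{p^kt,\,p^k(p-2-t)}$; (E2) for $s\ge2$, $0\le l<p^k$, $0\le\beta\le p-1$: $V_{s-1,l}\to W_{s,pl+\beta}$, block $B_{p^k(p-1)-((p-1)l+\beta),\,(p-1)l+\beta}$; (E3) for $s\ge 2$, $0\le l'<p^{k+1}$ and $t=\lfloor l'/p^k\rfloor$: $W_{s,l'}\to V_{s,l'-p^kt}$, block $B_{p^kt,\,p^k(p-1-t)}$. A path ending at a vertex $v$ is a sequence of edges starting at some $S_i$ and going up one floor at a time to $v$ ($S_i\to V_{1,\cdot}\to W_{2,\cdot}\to V_{2,\cdot}\to W_{3,\cdot}\to\cdots\to v$); $\mathcal P(v)$ is the set of all paths ending at $v$. The blocks of a path are numbered $B^2,B^3,\dots,B^N$: $B^2$ is the block of the edge leaving $S_i$, and for $j\ge2$, $B^{2j-1}$ is the block of the edge into $W_{j,\cdot}$ and $B^{2j}$ the block of the edge into $V_{j,\cdot}$. Write $B^j=B_{m_j,n_j}$. Descents: $1\in\mathrm{Des}(P)$ iff $m_2=p^kt$ with $0\le t<\frac{p-1}{2}$; $2\notin\mathrm{Des}(P)$; for $3\le j<N$, $j\in\mathrm{Des}(P)$ iff $m_j>m_{j+1}$ and $n_j<n_{j+1}$. $\mathrm{des}(P)=|\mathrm{Des}(P)|$. The $p^k$-Fibonacci number of a vertex $v$ is $\mathcal M_v=\sum_{P\in\mathcal P(v)}\mathrm{des}(P)$.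 *)

From mathcomp Require Import all_boot all_order all_algebra.
Set Implicit Arguments. Unset Strict Implicit. Unset Printing Implicit Defensive.

(* A path ending at V_{s,l} is encoded by the index i of its start S_i and the
   sequence v = [:: l_1; l'_2; l_2; l'_3; l_3; ...; l'_s; l_s] (size 2s-1) of
   the indices of the vertices V_{1,l_1}, W_{2,l'_2}, V_{2,l_2}, ..., V_{s,l_s}.
   Position of l_j in v is 2j-2, position of l'_j is 2j-3. *)

(* edge S_i -> V_{1,l} (E1) *)
Definition edgeE1 (p k i l : nat) : bool :=
  [&& i < p ^ k * (p - 1), l < p ^ k &
      has (fun t => i == p ^ k * t + l) (iota 0 (p - 1))].

(* edge V_{s-1,l} -> W_{s,l'} (E2) *)
Definition edgeE2 (p k l l' : nat) : bool :=
  (l < p ^ k) && has (fun beta => l' == p * l + beta) (iota 0 p).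

(* edge W_{s,l'} -> V_{s,l''} (E3) *)
Definition edgeE3 (p k l' l'' : nat) : bool :=
  (l' < p ^ (k + 1)) && (l'' == l' - p ^ k * (l' %/ p ^ k)).

Definition is_path (p k s l i : nat) (v : seq nat) : bool :=
  [&& 1 <= s, size v == (2 * s - 1)%N, edgeE1 p k i (nth 0 v 0),
      all (fun j => edgeE2 p k (nth 0 v (2 * j - 4)) (nth 0 v (2 * j - 3))
                    && edgeE3 p k (nth 0 v (2 * j - 3)) (nth 0 v (2 * j - 2)))
          (index_iota 2 s.+1)
    & nth 0 v (2 * s - 2) == l].

(* block B^q = (m_q, n_q), q = 2, ..., 2s *)
Definition block (p k i : nat) (v : seq nat) (q : nat) : nat * nat :=
  if q == 2 then
    let t := i %/ p ^ k in (p ^ k * t, p ^ k * (p - 2 - t))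
  else if odd q then
    (* edge V_{j-1,l} -> W_{j,l'} with l' = p l + beta *)
    let l := nth 0 v (q - 3) in
    let l' := nth 0 v (q - 2) in
    let beta := l' - p * l in
    let r := ((p - 1) * l + beta)%N in
    (p ^ k * (p - 1) - r, r)
  else
    (* edge W_{j,l'} -> V_{j,l'-p^k t} *)
    let l' := nth 0 v (q - 3) in
    let t := l' %/ p ^ k in
    (p ^ k * t, p ^ k * (p - 1 - t)).

Definition des (p k s i : nat) (v : seq nat) : nat :=
  let N := (2 * s)%N in
  let m2 := (block p k i v 2).1 in
  (has (fun t => (m2 == p ^ k * t) && (t < (p - 1) %/ 2)) (iota 0 p) : nat)
  + \sum_(3 <= j < N)
      ((block p k i v j).1 > (block p k i v j.+1).1)
       && ((block p k i v j).2 < (block p k i v j.+1).2).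

(* All indices occurring in a path are < p^(k+1), so paths are enumerated as
   (i, v) with i < p^k (p-1) and v a (2s-1)-tuple of indices < p^(k+1). *)
Definition fibM (p k s l : nat) : nat :=
  \sum_(i < p ^ k * (p - 1))
   \sum_(v : (2 * s - 1).-tuple 'I_(p ^ (k + 1)) | is_path p k s l i (map val v))
     des p k s i (map val v).

From mathcomp Require Import all_boot all_order all_algebra.
From mathcomp Require Import zify ring.
Set Implicit Arguments. Unset Strict Implicit. Unset Printing Implicit Defensive.

(* A path in column 1 is determined by its start S_i and the indices l_j of
   its vertices V_{j,l_j}; each step V_{j,a} -> W_{j+1,pa+u} -> V_{j+1,u} may
   choose u < p freely.  Extending a path by one step adds exactly two new
   comparisons of consecutive blocks, around the new W-vertex and around the
   old last V-vertex, and they depend only on (l_{s-1}, l_s, u).  Since every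
   vertex V_{s+1,u} is reached by the same number (p-1)p^s of paths, the total
   number T_s of descents over all paths of length s satisfies a linear
   recurrence, and M_{V_{s+1,t}} is T_s plus the two new comparisons counted
   with u = t.  For p = 2h+1 the comparison at W is a descent iff l_s < h or
   l_s = h > u, and the one at V iff l_{s-1} + l_s >= p, or = p - 1 with
   l_s < u; counting these gives the closed forms. *)

Fixpoint words (m n : nat) : seq (seq nat) :=
  if n is n'.+1 then [seq rcons w x | w <- words m n', x <- iota 0 m] else [:: [::]].

Lemma mem_words m n w : (w \in words m n) = (size w == n) && all (fun x => x < m) w.
Proof.
elim: n w => [|n IHn] w /=; first by rewrite inE; case: w.
apply/allpairsP/idP => [[[u x] /= [+ + ->]]|].
  rewrite IHn mem_iota size_rcons all_rcons eqSS => /andP[-> ->] /=.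
  by rewrite andbT.
case/lastP: w => // u x; rewrite size_rcons eqSS all_rcons => /and3P[Hu Hx Ha].
by exists (u, x); rewrite /= IHn Hu Ha mem_iota.
Qed.

Lemma words_uniq m n : uniq (words m n).
Proof.
elim: n => //= n IHn; apply: allpairs_uniq => //; first exact: iota_uniq.
by move=> [u x] [u' x'] _ _ /= /rcons_inj [-> ->].
Qed.

Lemma big_tuple_words m n (F : seq nat -> nat) :
  \sum_(v : n.-tuple 'I_m) F (map val v) = \sum_(w <- words m n) F w.
Proof.
rewrite -(big_map (fun v : n.-tuple 'I_m => map val v) xpredT).
apply/perm_big/uniq_perm; last 1 first.
- move=> w; rewrite mem_words; apply/mapP/andP => [[v _ ->]|[/eqP Hs Ha]].
    rewrite size_map size_tuple; split=> //; apply/allP => _ /mapP[x _ ->]; exact: ltn_ord.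
  pose u := pmap (insub : nat -> option 'I_m) w.
  have Hu : map val u = w.
    rewrite /u (pmap_filter (insubK (ordinal m))) -[RHS](all_filterP Ha).
    by apply: eq_filter => x; case: insubP => [? -> _|/negbTE ->].
  have Hsz : size u == n by rewrite -Hs -Hu size_map.
  by exists (Tuple Hsz); rewrite ?mem_index_enum.
- by rewrite map_inj_uniq ?index_enum_uniq // => v v' /(inj_map val_inj)/val_inj.
- exact: words_uniq.
Qed.

Lemma sum_iota_pick m r (F : nat -> nat) : r < m ->
  \sum_(y <- iota 0 m) (if y == r then F y else 0) = F r.
Proof.
move=> Hr; rewrite (bigD1_seq r) ?mem_iota ?iota_uniq //= eqxx big1 ?addn0 //.
by move=> y /negbTE ->.
Qed.

Lemma divn_bounds p a x : p * a <= x < p * a + p -> x %/ p = a.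
Proof.
move=> Hx; have Hp : 0 < p by lia.
by apply/eqP; rewrite eqn_leq -ltnS !(leq_divRL, ltn_divLR) //; lia.
Qed.

Lemma sum_nat_block p q (F : nat -> nat) :
  \sum_(0 <= i < q * p) F i = \sum_(0 <= j < q) \sum_(0 <= u < p) F (p * j + u).
Proof.
rewrite big_nat_mul; apply: eq_bigr => j _.
rewrite -{1}[j * p]add0n big_addn mulSn addnK.
by apply: eq_bigr => u _; rewrite addnC mulnC.
Qed.

Lemma sum_ltn n u : u <= n -> \sum_(0 <= a < n) (a < u : nat) = u.
Proof.
move=> Hu; rewrite (@big_cat_nat _ _ _ u) //=.
rewrite [X in _ + X]big1_seq ?addn0; last first.
  by move=> a /andP[_]; rewrite mem_index_iota => /andP[Hua _]; rewrite ltnNge Hua.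
rewrite (eq_big_nat _ _ (F2 := fun => 1)) ?sum_nat_const_nat ?muln1 ?subn0 //.
by move=> a /andP[_ ->].
Qed.

Lemma sum_geq n m : m <= n -> \sum_(0 <= b < n) (m <= b : nat) = n - m.
Proof.
move=> Hm; have := sum_ltn Hm.
have : \sum_(0 <= b < n) ((m <= b : nat) + (b < m : nat)) = n.
  rewrite (eq_bigr (fun => 1)) ?sum_nat_const_nat ?muln1 ?subn0 // => b _.
  by rewrite leqNgt; case: ltnP.
rewrite big_split /=; lia.
Qed.

Lemma sum_eq_andb n c (P : pred nat) : c < n ->
  \sum_(0 <= a < n) ((a == c) && P a : nat) = P c.
Proof.
move=> Hc; rewrite /index_iota subn0 -(sum_iota_pick (fun a => (P a : nat)) Hc).
by apply: eq_bigr => a _; case: eqP.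
Qed.

Lemma nth_catl T (x0 : T) s1 s2 n : n < size s1 -> nth x0 (s1 ++ s2) n = nth x0 s1 n.
Proof. by move=> Hn; rewrite nth_cat Hn. Qed.

Lemma nth_cat_size T (x0 : T) s1 s2 n : nth x0 (s1 ++ s2) (size s1 + n) = nth x0 s2 n.
Proof. by rewrite nth_cat ltnNge leq_addr addKn. Qed.

Lemma edgeE1_col1 p i x : i < p * (p - 1) -> edgeE1 p 1 i x = (x == i %% p).
Proof.
move=> Hi; have Hp : 0 < p by case: p Hi.
rewrite /edgeE1 !expn1 Hi /=; apply/andP/eqP => [[Hx /hasP[t _ /eqP->]]|->].
  by rewrite mulnC modnMDl modn_small.
split; first by rewrite ltn_mod.
apply/hasP; exists (i %/ p); last by rewrite {1}(divn_eq i p) mulnC.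
by rewrite mem_iota ltn_divLR // mulnC.
Qed.

Lemma edgeE23_col1 p a x y : a < p ->
  edgeE2 p 1 a x && edgeE3 p 1 x y =
  [&& p * a <= x < p * a + p, x < p ^ 2 & y == x - p * a].
Proof.
move=> Ha; rewrite /edgeE2 /edgeE3 expn1 Ha /=.
have -> : has (fun beta => x == p * a + beta) (iota 0 p) = (p * a <= x < p * a + p).
  apply/hasP/idP => [[b]|Hx]; first by rewrite mem_iota => Hb /eqP->; lia.
  by exists (x - p * a); [rewrite mem_iota; lia | apply/eqP; lia].
by case Hx: (p * a <= x < p * a + p); rewrite //= (divn_bounds Hx).
Qed.

Lemma sum_edgesE23 p a (F : nat -> nat -> nat) : a < p ->
  \sum_(x <- iota 0 (p ^ 2)) \sum_(y <- iota 0 (p ^ 2))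
     (if edgeE2 p 1 a x && edgeE3 p 1 x y then F x y else 0)
  = \sum_(0 <= u < p) F (p * a + u) u.
Proof.
move=> Ha; have Hp2 : p * a + p <= p ^ 2 by nia.
transitivity (\sum_(0 <= x < p ^ 2 | p * a <= x < p * a + p) F x (x - p * a)).
  rewrite [RHS]big_mkcond /index_iota subn0; apply: eq_big_seq => x.
  rewrite mem_iota => /andP[_ Hx].
  under eq_bigr => y _ do rewrite edgeE23_col1 // Hx /=.
  by case: ifP => Hax; [apply: sum_iota_pick; lia | rewrite big1].
have -> : \sum_(0 <= x < p ^ 2 | p * a <= x < p * a + p) F x (x - p * a) =
          \sum_(p * a <= x < p * a + p) F x (x - p * a).
  rewrite (big_nat_widen _ _ _ _ _ Hp2) (@big_nat_widenl _ _ _ (p * a) 0) //.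
  by apply: eq_bigl => x; rewrite andbC.
rewrite -{1}[p * a]add0n big_addn addnC addnK.
by apply: eq_bigr => u _; rewrite addnK addnC.
Qed.

Local Notation lastV s w := (nth 0 w (2 * s - 2)).
Local Notation prevV s w := (nth 0 w (2 * s - 4)).

Lemma is_path_size p k s l i w : is_path p k s l i w -> size w = 2 * s - 1.
Proof. by case/and5P => _ /eqP. Qed.

Lemma is_pathE p k s l i w :
  is_path p k s l i w = is_path p k s (lastV s w) i w && (lastV s w == l).
Proof. by rewrite /is_path eqxx andbT !andbA. Qed.

Lemma index_iota_rcons m n : m <= n -> index_iota m n.+1 = rcons (index_iota m n) n.
Proof. by move=> Hmn; rewrite /index_iota subSn // -addn1 iotaD subnKC // cats1. Qed.

Lemma lastV_cat2 s (w : seq nat) x y : 0 < s -> size w = 2 * s - 1 ->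
  lastV s.+1 (w ++ [:: x; y]) = y.
Proof. by move=> Hs Hw; rewrite (_ : 2 * s.+1 - 2 = size w + 1) ?nth_cat_size //; lia. Qed.

Lemma prevV_cat2 s (w : seq nat) x y : 0 < s -> size w = 2 * s - 1 ->
  prevV s.+1 (w ++ [:: x; y]) = lastV s w.
Proof. by move=> Hs Hw; rewrite (_ : 2 * s.+1 - 4 = 2 * s - 2) ?nth_catl //; lia. Qed.

Lemma is_path_cat2 p k s x y l i (w : seq nat) : 0 < s -> size w = 2 * s - 1 ->
  is_path p k s.+1 l i (w ++ [:: x; y]) =
  [&& is_path p k s (lastV s w) i w, edgeE2 p k (lastV s w) x, edgeE3 p k x y & y == l].
Proof.
move=> Hs Hw; rewrite /is_path Hs size_cat Hw /= nth_catl ?Hw; last lia.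
rewrite (index_iota_rcons (_ : 2 <= s.+1)) // all_rcons.
have -> : 2 * s.+1 - 3 = size w + 0 by lia.
have -> : 2 * s.+1 - 2 = size w + 1 by lia.
have -> : 2 * s.+1 - 4 = 2 * s - 2 by lia.
rewrite !nth_cat_size nth_catl; last lia.
rewrite (@eq_in_all _ _ (fun j => edgeE2 p k (nth 0 w (2 * j - 4)) (nth 0 w (2 * j - 3))
                        && edgeE3 p k (nth 0 w (2 * j - 3)) (nth 0 w (2 * j - 2)))); last first.
  by move=> j; rewrite mem_index_iota => Hj /=; rewrite !nth_catl //; lia.
have -> : 2 * s - 1 + 2 == 2 * s.+1 - 1 by apply/eqP; lia.
rewrite !eqxx andbT /=.
set e1 := edgeE1 _ _ _ _; set a := all _ _; set e2 := edgeE2 _ _ _ x.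
by case: e1 a e2 => [] [] []; rewrite /= ?andbT ?andbF.
Qed.

(* When a path ending at V_{s,a}, entered from W_{s,pb+a}, is extended by
   V_{s,a} -> W_{s+1,pa+u} -> V_{s+1,u}, [des_atW p a u] is the descent test
   between the blocks B^{2s+1}, B^{2s+2} around W_{s+1,pa+u}, and
   [des_atV p b a u] the one between B^{2s}, B^{2s+1} around V_{s,a}. *)

Definition des_atW p a u : bool :=
  (p * a < p * (p - 1) - ((p - 1) * a + u)) && ((p - 1) * a + u < p * (p - 1 - a)).

Definition des_atV p b a u : bool :=
  (p * (p - 1) - ((p - 1) * a + u) < p * b) && (p * (p - 1 - b) < (p - 1) * a + u).

Section Column1.

Variable p : nat.

Lemma is_path_last_edge s l i w : 1 < s -> is_path p 1 s l i w ->
  [/\ prevV s w < p, lastV s w < p & nth 0 w (2 * s - 3) = p * prevV s w + lastV s w].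
Proof.
move=> Hs /and5P[_ _ _ /allP /(_ s) + _].
rewrite mem_index_iota ltnSn Hs => /(_ isT) /andP[].
rewrite /edgeE2 /edgeE3 expn1 => /andP[Hb /hasP[beta]].
rewrite mem_iota => /andP[_ Hbeta] /eqP-> /andP[_ /eqP->].
by rewrite (@divn_bounds _ (prevV s w)); [split=> //; lia | lia].
Qed.

Lemma is_path_end_lt s l i w : 0 < s -> is_path p 1 s l i w -> lastV s w < p.
Proof.
case: s => [//|[|s]] _ Hw; last by case: (is_path_last_edge (isT : 1 < s.+2) Hw).
by case/and5P: Hw => _ _ /and3P[_ +] _ _; rewrite expn1.
Qed.

Definition path_sum s (G : nat -> seq nat -> nat) :=
  \sum_(0 <= i < p * (p - 1))
    \sum_(w <- words (p ^ 2) (2 * s - 1) | is_path p 1 s (lastV s w) i w) G i w.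

Lemma eq_path_sum s G1 G2 :
  (forall i w, is_path p 1 s (lastV s w) i w -> G1 i w = G2 i w) ->
  path_sum s G1 = path_sum s G2.
Proof. by move=> eqG; apply: eq_bigr => i _; apply: eq_bigr => w /eqG. Qed.

Lemma path_sumD s G1 G2 :
  path_sum s (fun i w => G1 i w + G2 i w) = path_sum s G1 + path_sum s G2.
Proof. by rewrite /path_sum -big_split; apply: eq_bigr => i _; rewrite big_split. Qed.

Lemma path_sumMl s c G : path_sum s (fun i w => c * G i w) = c * path_sum s G.
Proof. by rewrite /path_sum big_distrr; apply: eq_bigr => i _; rewrite big_distrr. Qed.

Lemma fibM_path_sum s t :
  fibM p 1 s t = path_sum s (fun i w => (lastV s w == t) * des p 1 s i w).
Proof.
rewrite /fibM /path_sum big_mkord expn1 addn1; apply: eq_bigr => i _.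
rewrite big_mkcond.
rewrite (big_tuple_words _ _ (fun w => if is_path p 1 s t i w then des p 1 s i w else 0)).
rewrite [RHS]big_mkcond; apply: eq_bigr => w _.
by rewrite is_pathE; case: is_path; case: eqP; rewrite ?mul1n ?mul0n.
Qed.

Lemma path_sumS s G : 0 < s ->
  path_sum s.+1 G =
  path_sum s (fun i w => \sum_(0 <= u < p) G i (w ++ [:: p * lastV s w + u; u])).
Proof.
move=> Hs; apply: eq_bigr => i _.
rewrite (_ : 2 * s.+1 - 1 = (2 * s - 1).+2); last lia.
rewrite big_mkcond [RHS]big_mkcond /= !big_allpairs_dep /=.
apply: eq_big_seq => w; rewrite mem_words => /andP[/eqP Hw _].
have rcons2 x y : rcons (rcons w x) y = w ++ [:: x; y] by rewrite -!cats1 -catA.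
under eq_bigr => x _ do under eq_bigr => y _ do
  rewrite rcons2 is_path_cat2 // lastV_cat2 // eqxx andbT.
case: ifP => Hpath; last by rewrite big1 // => x _; rewrite big1.
exact: (sum_edgesE23 (fun x y => G i (w ++ [:: x; y])) (is_path_end_lt Hs Hpath)).
Qed.

Lemma block_cat i (w z : seq nat) q : 0 < size w -> q <= size w + 1 ->
  block p 1 i (w ++ z) q = block p 1 i w q.
Proof.
by move=> Hw Hq; rewrite /block !nth_catl //; lia.
Qed.

Lemma block_V i v j : 1 < j ->
  block p 1 i v (2 * j) =
  (p * (nth 0 v (2 * j - 3) %/ p), p * (p - 1 - nth 0 v (2 * j - 3) %/ p)).
Proof. by move=> Hj; rewrite /block expn1 oddM ifN //; lia. Qed.

Lemma block_W i v j a u : 0 < j -> nth 0 v (2 * j - 2) = a ->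
  nth 0 v (2 * j - 1) = p * a + u ->
  block p 1 i v (2 * j).+1 = (p * (p - 1) - ((p - 1) * a + u), (p - 1) * a + u).
Proof.
move=> Hj Ha Hx; rewrite /block expn1 /= oddM ifN; last lia.
have -> : (2 * j).+1 - 3 = 2 * j - 2 by lia.
have -> : (2 * j).+1 - 2 = 2 * j - 1 by lia.
by rewrite Ha Hx addKn.
Qed.

Lemma des_cat2 s i w u : 0 < s -> is_path p 1 s (lastV s w) i w -> u < p ->
  des p 1 s.+1 i (w ++ [:: p * lastV s w + u; u]) =
  des p 1 s i w + des_atW p (lastV s w) u
    + (1 < s) * des_atV p (prevV s w) (lastV s w) u.
Proof.
move=> Hs Hw Hu; have Hsz := is_path_size Hw; have Ha := is_path_end_lt Hs Hw.
set a := lastV s w in Ha *; set w' := w ++ _.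
have nth_x : nth 0 w' (2 * s - 1) = p * a + u.
  by rewrite (_ : 2 * s - 1 = size w + 0) ?nth_cat_size //; lia.
have block_w q : q <= 2 * s -> block p 1 i w' q = block p 1 i w q.
  by move=> Hq; apply: block_cat; lia.
have Wblock : block p 1 i w' (2 * s).+1 = (p * (p - 1) - ((p - 1) * a + u), (p - 1) * a + u).
  by apply: block_W nth_x => //; rewrite nth_catl //; lia.
have Vblock : block p 1 i w' (2 * s).+2 = (p * a, p * (p - 1 - a)).
  rewrite (_ : (2 * s).+2 = 2 * s.+1); last lia.
  rewrite block_V; last lia.
  have -> : 2 * s.+1 - 3 = 2 * s - 1 by lia.
  by rewrite nth_x (@divn_bounds _ a) //; lia.
rewrite /des block_w /=; last lia.
rewrite -!addnA; congr (_ + _); rewrite !addnA.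
rewrite (_ : 2 * s.+1 = (2 * s).+2); last lia.
rewrite big_nat_recr /=; last lia.
rewrite Wblock Vblock /= -/(des_atW p a u) addnAC; congr (_ + _).
case: (ltnP 1 s) => Hs1 /=; last by rewrite (_ : s = 1) ?big_geq; lia.
rewrite big_nat_recr /=; last lia.
have [Hb _ Hx] := is_path_last_edge Hs1 Hw.
rewrite (block_w (2 * s)) // block_V // Hx (@divn_bounds _ (prevV s w)); last lia.
rewrite Wblock /= -/(des_atV p (prevV s w) a u) mul1n; congr (_ + _).
by apply: eq_big_nat => j Hj; rewrite !block_w //; lia.
Qed.

Hypothesis p_gt0 : 0 < p.

Lemma path_sum1 G : path_sum 1 G = \sum_(0 <= i < p * (p - 1)) G i [:: i %% p].
Proof.
apply: eq_big_nat => i Hi; rewrite big_mkcond.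
rewrite (_ : words _ (2 * 1 - 1) = [seq rcons w x | w <- [:: [::]], x <- iota 0 (p ^ 2)]) //.
rewrite big_allpairs_dep big_seq1 /=.
under eq_bigr => x _ do rewrite /is_path /= eqxx andbT edgeE1_col1 ?(andP Hi).2 //.
by apply: (sum_iota_pick (fun x => G i [:: x])); rewrite (@leq_trans p) ?ltn_mod ?leq_pmull.
Qed.

Lemma path_sum_lastV s (H : nat -> nat) :
  path_sum s.+1 (fun i w => H (lastV s.+1 w)) = (p - 1) * p ^ s * \sum_(0 <= u < p) H u.
Proof.
elim: s H => [|s IHs] H.
  rewrite path_sum1 mulnC sum_nat_block expn0 muln1.
  transitivity (\sum_(0 <= j < p - 1) \sum_(0 <= u < p) H u).
    apply: eq_bigr => j _; apply: eq_big_nat => u /andP[_ Hu].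
    by rewrite mulnC modnMDl modn_small.
  by rewrite sum_nat_const_nat subn0 muln1.
rewrite path_sumS //.
rewrite (@eq_path_sum _ _ (fun i w => \sum_(0 <= u < p) H u)); last first.
  by move=> i w /is_path_size Hw; apply: eq_bigr => u _; rewrite lastV_cat2.
rewrite (IHs (fun=> \sum_(0 <= u < p) H u)) sum_nat_const_nat subn0 expnS.
by rewrite [p * p ^ s]mulnC !mulnA.
Qed.

Lemma path_sum_prevV_lastV s (H : nat -> nat -> nat) :
  path_sum s.+2 (fun i w => H (prevV s.+2 w) (lastV s.+2 w)) =
  (p - 1) * p ^ s * \sum_(0 <= b < p) \sum_(0 <= a < p) H b a.
Proof.
rewrite path_sumS // -path_sum_lastV; apply: eq_path_sum => i w /is_path_size Hw.
by apply: eq_bigr => u _; rewrite lastV_cat2 ?prevV_cat2.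
Qed.

Definition total_des s := path_sum s (des p 1 s).

Lemma total_des1 : total_des 1 = p * ((p - 1) %/ 2).
Proof.
have des1 i : i < p * (p - 1) -> des p 1 1 i [:: i %% p] = (i %/ p < (p - 1) %/ 2).
  move=> Hi; rewrite /des big_geq // addn0 expn1; congr nat_of_bool.
  apply/hasP/idP => [[t _ /andP[]]|Hlt]; first by rewrite eqn_pmul2l // => /eqP->.
  exists (i %/ p); rewrite ?eqxx ?Hlt // mem_iota ltn_divLR //.
  by rewrite (leq_trans Hi) ?leq_mul2l ?leq_subr ?orbT.
rewrite /total_des path_sum1.
rewrite (eq_big_nat _ _ (F2 := fun i => (i %/ p < (p - 1) %/ 2 : nat))); last first.
  by move=> i /andP[_ /des1].
rewrite mulnC sum_nat_block.
rewrite (eq_big_nat _ _ (F2 := fun j => p * (j < (p - 1) %/ 2))); last first.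
  move=> j _; rewrite (eq_big_nat _ _ (F2 := fun => (j < (p - 1) %/ 2 : nat))).
    by rewrite sum_nat_const_nat subn0.
  by move=> u /andP[_ Hu]; rewrite (@divn_bounds _ j) //; lia.
by rewrite -big_distrr /= sum_ltn // leq_div.
Qed.

Lemma total_desS s : 0 < s ->
  total_des s.+1 = p * total_des s
    + path_sum s (fun i w => \sum_(0 <= u < p) des_atW p (lastV s w) u)
    + (1 < s) * path_sum s (fun i w => \sum_(0 <= u < p) des_atV p (prevV s w) (lastV s w) u).
Proof.
move=> Hs; rewrite /total_des path_sumS //.
rewrite -!path_sumMl -!path_sumD.
apply: eq_path_sum => i w Hw.
rewrite (eq_big_nat _ _ (F2 := fun u => des p 1 s i w + des_atW p (lastV s w) u
   + (1 < s) * des_atV p (prevV s w) (lastV s w) u)); last first.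
  by move=> u /andP[_ Hu]; rewrite des_cat2.
by move: (des p 1 s i w) => d; rewrite !big_split /= -big_distrr sum_nat_const_nat subn0.
Qed.

End Column1.

Lemma des_atVE p b a u : b < p -> a < p -> u < p ->
  des_atV p b a u = (p <= b + a) || (b + a == p - 1) && (a < u).
Proof.
move=> Hb Ha Hu; rewrite /des_atV.
case: (ltnP (b + a) p) => Hba /=; last by apply/andP; split; nia.
have [->|Hlt] : b = p - 1 - a \/ b < p - 1 - a by lia.
  rewrite (_ : p - 1 - a + a == p - 1); last by apply/eqP; lia.
  by case: (ltnP a u) => Hau /=; [apply/andP; split | apply/negbTE/nandP; left]; nia.
rewrite (_ : b + a == p - 1 = false); last by apply/negbTE; lia.
by apply/negbTE/nandP; left; nia.
Qed.

Lemma sum_des_atV p a u : a < p -> u < p -> \sum_(0 <= b < p) des_atV p b a u = a + (a < u).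
Proof.
move=> Ha Hu.
rewrite (eq_big_nat _ _ (F2 := fun b => (p - a <= b : nat) + ((b == p - 1 - a) && (a < u)))).
  by rewrite big_split /= sum_geq ?leq_subr // sum_eq_andb; [congr (_ + _) | ]; lia.
move=> b /andP[_ Hb]; rewrite des_atVE //.
by case: (a < u); case: (leqP p (b + a)) => ?; case: (leqP (p - a) b) => ?;
   do 2 case: eqP => ? //=; lia.
Qed.

Section OddColumn1.

Variables p h : nat.
Hypothesis p_eq : p = 2 * h + 1.

Lemma des_atWE a u : a < p -> u < p -> des_atW p a u = (a < h) || (a == h) && (u < h).
Proof.
rewrite p_eq => Ha Hu; rewrite /des_atW (_ : 2 * h + 1 - 1 = 2 * h); last lia.
case: (ltngtP a h) => Hah /=; first by apply/andP; split; nia.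
  by apply/negbTE/nandP; left; nia.
by subst a; case: (ltnP u h) => Huh; [apply/andP; split | apply/negbTE/nandP; left]; nia.
Qed.

Lemma sum_des_atW u : u < p -> \sum_(0 <= a < p) des_atW p a u = h + (u < h).
Proof.
move=> Hu; rewrite (eq_big_nat _ _ (F2 := fun a => (a < h : nat) + ((a == h) && (u < h)))).
  by rewrite big_split /= sum_ltn ?sum_eq_andb; lia.
move=> a /andP[_ Ha]; rewrite des_atWE //.
by case: (u < h); case: (ltnP a h) => ?; case: eqP => ? //=; lia.
Qed.

Lemma sum_nat_id : \sum_(0 <= a < p) a = p * h.
Proof.
rewrite bin2_sum bin2odd; last by rewrite p_eq addn1 /= oddM.
by rewrite p_eq addn1 /= -divn2 mulKn.
Qed.

Let p_gt0 : 0 < p. Proof. by rewrite p_eq addn1. Qed.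

Lemma sum2_des_atW : \sum_(0 <= a < p) \sum_(0 <= u < p) des_atW p a u = p * h + h.
Proof.
rewrite exchange_big /= (eq_big_nat _ _ (F2 := fun u => h + (u < h))).
  by rewrite big_split /= sum_nat_const_nat sum_ltn; lia.
by move=> u /andP[_ Hu]; rewrite sum_des_atW.
Qed.

Lemma sum2_des_atV u : u < p ->
  \sum_(0 <= b < p) \sum_(0 <= a < p) des_atV p b a u = p * h + u.
Proof.
move=> Hu; rewrite exchange_big /= (eq_big_nat _ _ (F2 := fun a => a + (a < u))).
  by rewrite big_split /= sum_nat_id sum_ltn //; lia.
by move=> a /andP[_ Ha]; rewrite sum_des_atV.
Qed.

Lemma sum3_des_atV :
  \sum_(0 <= b < p) \sum_(0 <= a < p) \sum_(0 <= u < p) des_atV p b a u = p * p * h + p * h.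
Proof.
rewrite (eq_bigr (fun b => \sum_(0 <= u < p) \sum_(0 <= a < p) des_atV p b a u));
  last by move=> b _; rewrite exchange_big.
rewrite exchange_big /= (eq_big_nat _ _ (F2 := fun u => p * h + u)).
  by rewrite big_split /= sum_nat_const_nat sum_nat_id; lia.
by move=> u /andP[_ Hu]; rewrite sum2_des_atV.
Qed.

Lemma total_desE n :
  total_des p n.+2 = h * p ^ n * (8 * h * h + 8 * h + 1 + 8 * n * (h * h + h)).
Proof.
have W s : path_sum p s.+1 (fun i w => \sum_(0 <= u < p) des_atW p (lastV s.+1 w) u) =
           (p - 1) * p ^ s * (p * h + h).
  by rewrite (path_sum_lastV p_gt0 s (fun a => \sum_(0 <= u < p) des_atW p a u)) sum2_des_atW.
elim: n => [|n IHn].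
  rewrite total_desS // mul0n addn0 (total_des1 p_gt0) W.
  by rewrite (_ : (p - 1) %/ 2 = h) p_eq; lia.
rewrite total_desS // IHn W mul1n.
rewrite (path_sum_prevV_lastV p_gt0 n (fun b a => \sum_(0 <= u < p) des_atV p b a u)).
by rewrite sum3_des_atV expnS p_eq; nia.
Qed.

Lemma fibME n t : t < p ->
  fibM p 1 n.+3 t =
  total_des p n.+2 + (p - 1) * p ^ n.+1 * (h + (t < h)) + (p - 1) * p ^ n * (p * h + t).
Proof.
move=> Ht; rewrite fibM_path_sum path_sumS //.
rewrite (@eq_path_sum _ _ _ (fun i w => des p 1 n.+2 i w + des_atW p (lastV n.+2 w) t
   + des_atV p (prevV n.+2 w) (lastV n.+2 w) t)); last first.
  move=> i w Hw; rewrite -[nat_of_bool (des_atV _ _ _ _)]mul1n -(des_cat2 _ Hw Ht) //.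
  rewrite /index_iota subn0.
  rewrite -(sum_iota_pick (fun u => des p 1 n.+3 i (w ++ [:: p * lastV n.+2 w + u; u])) Ht).
  apply: eq_bigr => u _; rewrite lastV_cat2 ?(is_path_size Hw) //.
  by case: (u == t); rewrite ?mul1n ?mul0n.
rewrite (path_sumD _ _ (fun i w => des p 1 n.+2 i w + des_atW p (lastV n.+2 w) t)).
rewrite (path_sumD _ _ (des p 1 n.+2)) (path_sum_lastV p_gt0 n.+1 (fun a => des_atW p a t)).
rewrite (path_sum_prevV_lastV p_gt0 n (fun b a => des_atV p b a t)).
by rewrite sum_des_atW // sum2_des_atV.
Qed.

End OddColumn1.

Import GRing.Theory Num.Theory.
Local Open Scope ring_scope.

Theorem mainTheorem6 (p s t : nat) :
  prime p -> odd p -> (3 <= s)%N -> (t <= p - 1)%N ->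
  (fibM p 1 s t)%:R =
    (if (t < (p - 1) %/ 2)%N then
       (p%:R ^+ (s - 3) * (p%:R - 1) / 2) *
         (2 * (s%:R - 1) * p%:R ^+ 2 + 2 * t%:R - (2 * s%:R - 5))
     else
       (p%:R ^+ (s - 3) * (p%:R - 1) / 2) *
         (2 * (s%:R - 1) * p%:R ^+ 2 + 2 * t%:R - 2 * p%:R - (2 * s%:R - 5)) : rat).
Proof.
move=> _ p_odd s_ge3 t_le.
have p_eq : p = (2 * p./2 + 1)%N by rewrite -{1}(odd_double_half p) p_odd addnC mul2n.
have [n ->] : exists n, s = n.+3 by exists (s - 3)%N; lia.
have half_eq : ((p - 1) %/ 2)%N = p./2 by rewrite p_eq; lia.
rewrite (fibME p_eq) ?(total_desE p_eq) ?half_eq; last lia.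
rewrite (_ : (n.+3 - 3)%N = n); last lia.
move: p./2 p_eq => h ->; rewrite (_ : (2 * h + 1 - 1)%N = (2 * h)%N); last lia.
by case: ifP => _; rewrite -addn3 /= ?addn0 !(natrD, natrM, natrX) exprS; field.
Qed.
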